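(* Let $T\in\mathsf{SYT}(\lambda)$, let $\alpha=\mathsf{Des}(T)=(\alpha_1,\dots,\alpha_\ell)$, and let $I=[i,i+2m]$ be a Dyck pattern interval of $T$; write $I^-=[i,i+m-1]$ and $I^+=[i+m+1,i+2m]$. Then there is $1\le j<\ell$ with $I^-\cup\{i+m\}\subseteq\alpha^{(j)}$ and $I^+\subseteq\alpha^{(j+1)}$.
   Context: French notation; $|\lambda|=N$; $\mathsf{SYT}(\lambda)$ standard tableaux. The reading word $\mathsf{row}(T)$ reads rows left to right from the top row to the bottom row. For a permutation $\pi$ of $[N]$ and $I=[i,i+2m]\subseteq[N]$, $m\ge1$, $I$ is a Dyck pattern interval of $\pi$ if the RSK insertion tableau of the subword $\pi|_I$ of letters in $I$ has bottom row $i,\dots,i+m$ and top row $i+m+1,\dots,i+2m$; a Dyck pattern interval of $T$ is one of $\mathsf{row}(T)$. A letter $d$ is a descent of $T$ if $d+1$ lies in a strictly higher row than $d$; if the descents are $d_1<\dots<d_k$, then $\mathsf{Des}(T)=(d_1,d_2-d_1,\dots,d_k-d_{k-1},N-d_k)$. For a composition $\alpha=(\alpha_1,\dots,\alpha_\ell)$ of $N$, $\alpha^{(j)}=\{\alpha_1+\dots+\alpha_{j-1}+1,\dots,\alpha_1+\dots+\alpha_j\}$. *)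

From mathcomp Require Import all_boot.
Set Implicit Arguments. Unset Strict Implicit. Unset Printing Implicit Defensive.

(* Tableaux in French notation: a tableau is a list of rows, row 0 being the
   BOTTOM (longest) row; row k+1 sits directly above row k. *)

Definition is_partition (la : seq nat) : bool :=
  sorted geq la && all (fun p => 0 < p) la.

Definition shape (t : seq (seq nat)) : seq nat := map size t.

Definition rows_incr (t : seq (seq nat)) : bool := all (sorted ltn) t.

Definition cols_incr (t : seq (seq nat)) : bool :=
  [forall k : 'I_(size t),
     forall c : 'I_(size (nth [::] t k.+1)),
       nth 0 (nth [::] t k) c < nth 0 (nth [::] t k.+1) c].

Definition is_SYT (la : seq nat) (t : seq (seq nat)) : bool :=
  [&& is_partition la, shape t == la, rows_incr t, cols_incr t &
      perm_eq (flatten t) (iota 1 (sumn la))].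

Definition reading_word (t : seq (seq nat)) : seq nat := flatten (rev t).

Fixpoint rsk_insert (t : seq (seq nat)) (x : nat) : seq (seq nat) :=
  match t with
  | [::] => [:: [:: x]]
  | r :: t' =>
      let k := find (fun y => x < y) r in
      if k == size r then rcons r x :: t'
      else set_nth 0 r k x :: rsk_insert t' (nth 0 r k)
  end.

Definition rsk_P (w : seq nat) : seq (seq nat) := foldl rsk_insert [::] w.

Definition restrict (w : seq nat) (a b : nat) : seq nat :=
  [seq x <- w | a <= x <= b].

Definition dyck_interval_word (N : nat) (w : seq nat) (i m : nat) : Prop :=
  [/\ 1 <= m, 1 <= i, i + 2 * m <= N &
      rsk_P (restrict w i (i + 2 * m)) =
        [:: iota i m.+1; iota (i + m).+1 m]].

Definition dyck_interval (t : seq (seq nat)) (i m : nat) : Prop :=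
  dyck_interval_word (sumn (shape t)) (reading_word t) i m.

Definition row_of (t : seq (seq nat)) (d : nat) : nat := find (fun r => d \in r) t.

Definition is_descent (t : seq (seq nat)) (d : nat) : bool :=
  row_of t d < row_of t d.+1.

Definition descents (t : seq (seq nat)) : seq nat :=
  [seq d <- iota 1 (sumn (shape t)).-1 | is_descent t d].

Definition Des (t : seq (seq nat)) : seq nat :=
  pairmap (fun a b => b - a) 0 (rcons (descents t) (sumn (shape t))).

(* alpha^(j), 1-indexed block of the composition alpha *)
Definition block (alpha : seq nat) (j : nat) : pred nat :=
  fun x => (sumn (take j.-1 alpha) < x) && (x <= sumn (take j alpha)).

From mathcomp Require Import all_boot zify.
Set Implicit Arguments. Unset Strict Implicit. Unset Printing Implicit Defensive.

(* In the insertion tableau of a permutation word, a+1 lies strictly above a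
   exactly when a+1 precedes a in the word, because inserting any other letter
   does not change which of a, a+1 is higher.  In the reading word of a standard
   tableau, a+1 precedes a exactly when a+1 lies strictly above a.  Restricting
   the reading word to I keeps the relative order of a and a+1, so the descents
   of T inside [i, i+2m) are those of the two-row insertion tableau of the
   restricted word, i.e. only i+m.  Thus i+m is a partial sum of Des(T) and no
   other partial sum lies in [i, i+2m), so [i, i+m] and [i+m+1, i+2m] fall into
   consecutive blocks. *)

Lemma sorted_cat_consE (T : Type) (leT : rel T) : transitive leT ->
  forall s1 x s2, sorted leT (s1 ++ x :: s2) =
  [&& sorted leT s1, all (leT^~ x) s1, all (leT x) s2 & sorted leT s2].
Proof.
move=> leT_tr s1 x s2; rewrite sorted_cat_cons (sorted_pairwise leT_tr (rcons _ _)).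
rewrite pairwise_rcons -(sorted_pairwise leT_tr) (path_sortedE leT_tr).
by case: (sorted _ s1); case: all.
Qed.

Lemma row_of_cons r t z :
  row_of (r :: t) z = if z \in r then 0 else (row_of t z).+1.
Proof. by []. Qed.

Variant insert_row_spec x r t : seq (seq nat) -> Type :=
  | RowAppend of all (leq^~ x) r : insert_row_spec x r t (rcons r x :: t)
  | RowBump r1 y r2 of r = r1 ++ y :: r2 & all (leq^~ x) r1 & x < y :
      insert_row_spec x r t ((r1 ++ x :: r2) :: rsk_insert t y).

Lemma rsk_insert_consP x r t : insert_row_spec x r t (rsk_insert (r :: t) x).
Proof.
rewrite /=; set k := find _ r; case: eqP => [k_size | /eqP k_size].
  apply: RowAppend.
  have : ~~ has (fun y => x < y) r by rewrite has_find -/k k_size ltnn.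
  by rewrite -all_predC; apply: sub_all => z /=; rewrite -leqNgt.
have lt_k : k < size r by rewrite ltn_neqAle k_size find_size.
rewrite set_nthE lt_k; apply: RowBump.
- by rewrite -drop_nth // cat_take_drop.
- apply/allP => z /(nthP 0) [j]; rewrite size_take lt_k => lt_jk <-.
  by rewrite nth_take // leqNgt; apply/negbT/(before_find 0 lt_jk).
- by apply: nth_find; rewrite has_find.
Qed.

Lemma row_of_rsk_insert_self t x : row_of (rsk_insert t x) x = 0.
Proof.
case: t => [|r t]; first by rewrite /= inE eqxx.
by case: rsk_insert_consP => [_|r1 y r2 _ _ _];
  rewrite row_of_cons ?mem_rcons ?mem_cat !inE eqxx ?orbT.
Qed.

Lemma row_of_rsk_insert_succ t a :
  all (sorted ltn) t -> 0 < row_of (rsk_insert t a) a.+1.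
Proof.
case: t => [|r t]; first by rewrite /= /row_of /= inE gtn_eqF.
rewrite [all _ _]/= => /andP [sr _].
case: rsk_insert_consP => [ra | r1 y r2 def_r r1a ay]; rewrite row_of_cons.
  by rewrite mem_rcons inE gtn_eqF //=; case: ifP => // /(allP ra); rewrite ltnn.
move: sr; rewrite def_r (sorted_cat_consE ltn_trans) => /and4P [_ _ r2y _].
rewrite mem_cat inE gtn_eqF //=; case: ifP => //; case/orP => [/(allP r1a)|/(allP r2y)].
  by rewrite ltnn.
by rewrite /= ltnS leqNgt ay.
Qed.

Lemma rsk_insert_descent t x a : all (sorted ltn) t -> x != a -> x != a.+1 ->
  (row_of (rsk_insert t x) a < row_of (rsk_insert t x) a.+1) =
  (row_of t a < row_of t a.+1).
Proof.
elim: t x => [|r t IH] x.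
  by move=> _ xa xb; rewrite /row_of /= !inE ![_ == x]eq_sym (negbTE xa) (negbTE xb).
rewrite [all _ _]/= => /andP [sr st] xa xb.
case: rsk_insert_consP => [_ | r1 y r2 def_r r1x xy].
  by rewrite !row_of_cons !mem_rcons !inE ![_ == x]eq_sym (negbTE xa) (negbTE xb).
move: sr; rewrite def_r (sorted_cat_consE ltn_trans) => /and4P [_ _ r2y _].
have r1F z : x < z -> (z \in r1) = false.
  by move=> xz; apply: contraTF xz => /(allP r1x); rewrite leqNgt.
have r2F z : z <= y -> (z \in r2) = false.
  by move=> zy; apply: contraTF zy => /(allP r2y); rewrite -ltnNge.
rewrite !row_of_cons !mem_cat !inE ![_ == x]eq_sym (negbTE xa) (negbTE xb) /=.
have [ya|ya] := eqVneq y a.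
  subst y; rewrite (r1F a) // (r2F a) // (r1F a.+1) ?(ltn_trans xy) //= gtn_eqF //.
  by rewrite row_of_rsk_insert_self; case: ifP => //; rewrite ltnS row_of_rsk_insert_succ.
have [yb|yb] := eqVneq y a.+1.
  subst y; have xa' : x < a by rewrite ltn_neqAle xa -ltnS.
  by rewrite (r1F a) // (r2F a) // (r1F a.+1) // (r2F a.+1) //= row_of_rsk_insert_self.
rewrite /=; case: ifP => _; case: ifP => _ //; rewrite !ltnS; exact: IH.
Qed.

Definition row_strict (t : seq (seq nat)) : bool :=
  all (sorted ltn) t && uniq (flatten t).

Lemma perm_rsk_insert t x : perm_eq (flatten (rsk_insert t x)) (x :: flatten t).
Proof.
elim: t x => [|r t IH] x //.
case: rsk_insert_consP => [_ | r1 y r2 -> _ _]; apply/permP => p /=.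
  by rewrite -cats1 !count_cat /=; lia.
by rewrite !count_cat /= (permP (IH y)) /=; lia.
Qed.

Lemma rsk_insert_row_strict t x :
  row_strict t -> x \notin flatten t -> row_strict (rsk_insert t x).
Proof.
move=> /andP [st ut] xt; apply/andP; split; last first.
  by rewrite (perm_uniq (perm_rsk_insert t x)) /= xt.
elim: t x st ut xt => [|r t IH] x //; rewrite [all _ _]/= => /andP [sr st].
rewrite [flatten _]/= cat_uniq mem_cat negb_or => /and3P [_ rt ut] /andP [xr xt].
have ltx z : z \in r -> z <= x -> z < x.
  by move=> zr; rewrite leq_eqVlt => /orP [/eqP zx|//]; rewrite -zx zr in xr.
case: rsk_insert_consP => [rx | r1 y r2 def_r r1x xy] /=.
  rewrite st andbT -cats1 (sorted_cat_consE ltn_trans) sr /= andbT.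
  by apply/allP => z zr; apply: ltx zr (allP rx z zr).
move: sr rt xr; rewrite def_r (sorted_cat_consE ltn_trans) => /and4P [s1 _ r2y s2] rt xr.
rewrite (sorted_cat_consE ltn_trans) s1 s2 (sub_all _ r2y) => [|z]; last exact: ltn_trans.
rewrite /= !andbT; apply/andP; split.
  apply/allP => z zr1; apply: ltx; [by rewrite def_r mem_cat zr1|exact: allP r1x z zr1].
apply: IH => //; apply: contra rt => yt; apply/hasP; exists y => //.
by rewrite mem_cat inE eqxx orbT.
Qed.

Lemma rsk_P_rcons u x : rsk_P (rcons u x) = rsk_insert (rsk_P u) x.
Proof. by rewrite /rsk_P foldl_rcons. Qed.

Lemma perm_rsk_P u : perm_eq (flatten (rsk_P u)) u.
Proof.
elim/last_ind: u => [|u x IH] //; rewrite rsk_P_rcons.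
apply: perm_trans (perm_rsk_insert _ x) _.
by rewrite perm_sym perm_rcons perm_cons perm_sym.
Qed.

Lemma rsk_P_row_strict u : uniq u -> row_strict (rsk_P u).
Proof.
elim/last_ind: u => [|u x IH] //; rewrite rcons_uniq rsk_P_rcons => /andP [xu uu].
by apply: rsk_insert_row_strict (IH uu) _; rewrite (perm_mem (perm_rsk_P u)).
Qed.

Lemma index_rcons_mem (T : eqType) (s : seq T) x z :
  z \in s -> index z (rcons s x) = index z s.
Proof. by move=> zs; rewrite -cats1 index_cat zs. Qed.

Lemma rsk_P_descent u a : uniq u -> a \in u -> a.+1 \in u ->
  (row_of (rsk_P u) a < row_of (rsk_P u) a.+1) = (index a.+1 u < index a u).
Proof.
elim/last_ind: u => [|u x IH] //; rewrite rcons_uniq rsk_P_rcons => /andP [xu uu].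
have sorted_P : all (sorted ltn) (rsk_P u) by case/andP: (rsk_P_row_strict uu).
rewrite !mem_rcons !inE.
have [ax|xa] := eqVneq a x.
  subst x; rewrite gtn_eqF //= => _ a1u.
  rewrite row_of_rsk_insert_self row_of_rsk_insert_succ //.
  rewrite (index_rcons_mem _ a1u) -cats1 index_cat (negbTE xu) index_head addn0.
  by rewrite index_mem.
have [bx|xb] := eqVneq a.+1 x.
  subst x => /= au _; rewrite row_of_rsk_insert_self ltn0 (index_rcons_mem _ au).
  by rewrite -cats1 index_cat (negbTE xu) index_head addn0 ltnNge ltnW // index_mem.
move=> /= au bu; rewrite rsk_insert_descent 1?eq_sym // IH // !index_rcons_mem //.
Qed.

Lemma ltn_index_filter (T : eqType) (p : pred T) (s : seq T) a b : p a -> p b ->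
  (index a (filter p s) < index b (filter p s)) = (index a s < index b s).
Proof.
move=> pa pb; elim: s => [|z s IH] //=.
have [za|za] := eqVneq z a; first by subst z; rewrite pa /= eqxx; case: (a == b).
have [zb|zb] := eqVneq z b; first by subst z; rewrite pb /= eqxx (negbTE za).
by case: (p z); rewrite /= ?(negbTE za) ?(negbTE zb).
Qed.

Lemma reading_word_cons r t : reading_word (r :: t) = reading_word t ++ r.
Proof. by rewrite /reading_word rev_cons flatten_rcons. Qed.

Lemma perm_reading_word t : perm_eq (reading_word t) (flatten t).
Proof. by apply: perm_flatten; rewrite perm_rev. Qed.

Lemma mem_reading_word t : reading_word t =i flatten t.
Proof. exact/perm_mem/perm_reading_word. Qed.

Lemma reading_word_index t x y : row_strict t ->
  x \in flatten t -> y \in flatten t -> x < y ->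
  (index y (reading_word t) < index x (reading_word t)) = (row_of t x < row_of t y).
Proof.
elim: t => [|r t IH] //; rewrite /row_strict [all _ _]/= [flatten _]/= cat_uniq.
case/andP=> /andP [sr st] /and3P [_ rt ut].
have rF z : z \in r -> (z \in flatten t) = false.
  by move=> zr; apply: contraNF rt => zt; apply/hasP; exists z.
rewrite reading_word_cons !index_cat !mem_reading_word !row_of_cons !mem_cat.
have [xr|xr] := boolP (x \in r); have [yr|yr] := boolP (y \in r) => /=.
- rewrite !rF // => _ _ xy; rewrite ltn_add2l; apply: contraTF xy.
  by move=> /(sorted_ltn_index ltn_trans sr _ _ yr xr) yx; rewrite -leqNgt ltnW.
- rewrite (rF x xr) => _ yt _; rewrite yt; apply: leq_trans (leq_addr _ _).
  by rewrite index_mem mem_reading_word.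
- rewrite (rF y yr) => xt _ _; rewrite xt ltn0; apply: negbTE; rewrite -leqNgt.
  by apply: leq_trans (leq_addr _ _); rewrite ltnW // index_mem mem_reading_word.
- by move=> xt yt xy; rewrite xt yt ltnS IH //; apply/andP.
Qed.

Lemma dyck_interval_is_descent la T i m d :
  is_SYT la T -> dyck_interval T i m -> i <= d < i + 2 * m ->
  is_descent T d = (d == i + m).
Proof.
case/and5P=> _ /eqP shapeT rowsT _ permT [m_gt0 i_gt0 le_N dyckP] d_in.
have strictT : row_strict T.
  by rewrite /row_strict -/(rows_incr T) rowsT (perm_uniq permT) iota_uniq.
rewrite /dyck_interval_word shapeT in le_N.
have memT z : 0 < z <= sumn la -> z \in flatten T.
  by rewrite (perm_mem permT) mem_iota; lia.
set inI := fun z => i <= z <= i + 2 * m.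
have mem_w (z : nat) : inI z -> z \in restrict (reading_word T) i (i + 2 * m).
  by rewrite /inI mem_filter mem_reading_word => z_in; rewrite z_in memT /=; lia.
have inI_d : inI d by rewrite /inI; lia.
have inI_d1 : inI d.+1 by rewrite /inI; lia.
rewrite /is_descent -reading_word_index ?memT //; try lia.
rewrite -(ltn_index_filter _ inI_d1 inI_d) -rsk_P_descent ?mem_w //; last first.
  by rewrite filter_uniq // (perm_uniq (perm_reading_word T)); case/andP: strictT.
rewrite dyckP !row_of_cons !mem_iota /=.
by do !case: ifP; lia.
Qed.

Definition composition_of (D : seq nat) (N : nat) : seq nat :=
  pairmap (fun a b => b - a) 0 (rcons D N).

Lemma sumn_take_pairmap_subn a0 S j : sorted leq (a0 :: S) -> j <= size S ->
  sumn (take j (pairmap (fun a b => b - a) a0 S)) = nth a0 (a0 :: S) j - a0.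
Proof.
elim: S a0 j => [|s S IH] a0 [|j] //=; rewrite ?subnn // => /andP [a0s sS] jS.
rewrite IH // (set_nth_default a0 s) //.
have : s <= nth a0 (s :: S) j.
  case: j jS => [|j] //= jS; rewrite (set_nth_default s) //.
  by apply: (allP (order_path_min leq_trans sS)); rewrite mem_nth.
lia.
Qed.

Lemma mem_block_composition D N j x :
  sorted leq (rcons D N) -> 0 < j <= (size D).+1 ->
  (x \in block (composition_of D N) j) =
  (nth 0 (0 :: rcons D N) j.-1 < x <= nth 0 (0 :: rcons D N) j).
Proof.
move=> sDN j_in; have s0DN : sorted leq (0 :: rcons D N).
  by rewrite /= path_min_sorted //; apply/allP.
by rewrite unfold_in /block !sumn_take_pairmap_subn ?size_rcons ?subn0 //; lia.
Qed.

Lemma composition_of_cut D N c lo hi :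
  sorted ltn D -> all (leq^~ N) D -> c \in D -> 0 < lo <= c -> c < hi <= N ->
  {in D, forall d, lo <= d < hi -> d = c} ->
  exists j, [/\ 1 <= j, j < size (composition_of D N),
    (forall x, lo <= x <= c -> x \in block (composition_of D N) j) &
    (forall x, c < x <= hi -> x \in block (composition_of D N) j.+1)].
Proof.
move=> sD DN cD /andP [lo_gt0 lo_c] /andP [c_hi hi_N] only_c.
have [k kD Dk] : exists2 k, k < size D & nth 0 D k = c.
  by exists (index c D); rewrite ?index_mem ?nth_index.
have sDN : sorted leq (rcons D N).
  rewrite (sorted_pairwise leq_trans) pairwise_rcons DN -(sorted_pairwise leq_trans).
  by apply: sub_sorted sD => a b /ltnW.
have cut_prev : nth 0 (0 :: rcons D N) k < lo.
  case: k kD Dk => [|k] kD Dk //=; have kD' : k < size D := ltnW kD.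
  rewrite nth_rcons kD'.
  have Dk_lt : nth 0 D k < c by rewrite -Dk; apply: (sorted_ltn_nth ltn_trans 0 sD).
  rewrite ltnNge; apply/negP => lo_Dk.
  have Dk_c : nth 0 D k = c by apply: only_c; rewrite ?mem_nth // lo_Dk (ltn_trans Dk_lt).
  by rewrite Dk_c ltnn in Dk_lt.
have cut_c : nth 0 (rcons D N) k = c by rewrite nth_rcons kD.
have cut_next : hi <= nth 0 (rcons D N) k.+1.
  rewrite nth_rcons; case: ltnP => [k1D | Dk1]; last first.
    by rewrite (_ : k.+1 = size D) ?eqxx; lia.
  have c_lt : c < nth 0 D k.+1 by rewrite -{1}Dk (sorted_ltn_nth ltn_trans).
  rewrite leqNgt; apply/negP => Dk1_hi.
  have := only_c (nth 0 D k.+1); rewrite mem_nth //; lia.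
exists k.+1; split => //.
- by rewrite size_pairmap size_rcons.
- by move=> x x_in; rewrite mem_block_composition //=; lia.
- by move=> x x_in; rewrite mem_block_composition //=; lia.
Qed.

Theorem lemma4p20 (la : seq nat) (T : seq (seq nat)) (i m : nat) :
  is_SYT la T -> dyck_interval T i m ->
  exists j : nat,
    [/\ 1 <= j, j < size (Des T),
        (forall x, i <= x <= i + m -> x \in block (Des T) j) &
        (forall x, (i + m).+1 <= x <= i + 2 * m -> x \in block (Des T) j.+1)].
Proof.
move=> SYT_T dyckT; have [m_gt0 i_gt0 le_N _] := dyckT.
have descentE := dyck_interval_is_descent SYT_T dyckT.
apply: (@composition_of_cut _ _ (i + m) i (i + 2 * m)).
- by apply: sorted_filter; [exact: ltn_trans | exact: iota_ltn_sorted].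
- by apply/allP => d; rewrite mem_filter mem_iota => /andP [_]; lia.
- by rewrite mem_filter descentE ?eqxx ?mem_iota /=; lia.
- by apply/andP; split; lia.
- by apply/andP; split; lia.
- move=> d; rewrite mem_filter => /andP [desc_d _] d_in.
  by move: desc_d; rewrite descentE // => /eqP.
Qed.
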